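(* Let $G$ be a finite group with centre $Z(G)$. Then \[ \frac{1}{|G|^2}\sum_{\chi, \chi' \in \mathrm{Irr}(G)} d_\chi d_{\chi'}\left|\sum_{x \in Z(G)}\chi(x)\overline{\chi'(x)}\right| = 1. \]
   Context: $\mathrm{Irr}(G)$ is the set of irreducible complex characters of $G$ and $d_\chi = \chi(e)$ is the degree of $\chi$. *)

From mathcomp Require Export all_boot all_order all_algebra all_fingroup all_solvable all_field all_character.

Import GRing.Theory Num.Theory.
Local Open Scope group_scope.
Local Open Scope ring_scope.

(* The centre plays no special role: for any subgroup H, the inner sum is
   #|H| times the inner product of the restrictions to H of two characters,
   hence a natural number, so the absolute values can be dropped.  Summed
   against the degrees, it becomes the squared norm of the regular character
   over H, which is concentrated at 1 where it equals #|G|. *)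

Section RegularCharacterOverSubgroup.

Variables (gT : finGroupType) (G H : {group gT}).
Hypothesis sHG : H \subset G.

Lemma sum_char_conj_nat (chi phi : 'CF(G)) :
    chi \is a character -> phi \is a character ->
  \sum_(x in H) chi x * (phi x)^* \is a Num.nat.
Proof.
move=> Nchi Nphi.
have ->: \sum_(x in H) chi x * (phi x)^* =
         #|H|%:R * '['Res[H] chi, 'Res[H] phi].
  rewrite cfdotE mulrA mulfV ?mul1r ?pnatr_eq0 -?lt0n ?cardG_gt0 //.
  by apply: eq_bigr => x Hx; rewrite !cfResE.
by rewrite rpredM ?rpred_nat ?Cnat_cfdot_char ?cfRes_char.
Qed.

Lemma sum_irr1_sum_irr_conj :
  \sum_(i : Iirr G) \sum_(j : Iirr G)
     'chi_i 1%g * 'chi_j 1%g * \sum_(x in H) 'chi_i x * ('chi_j x)^*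
  = \sum_(x in H) cfReg G x * (cfReg G x)^*.
Proof.
rewrite cfReg_sum; transitivity (\sum_(x in H) \sum_(i : Iirr G) \sum_(j : Iirr G)
    'chi_i 1%g * 'chi_j 1%g * ('chi_i x * ('chi_j x)^*)).
  rewrite [RHS]exchange_big; apply: eq_bigr => i _.
  by rewrite [RHS]exchange_big; apply: eq_bigr => j _; rewrite mulr_sumr.
apply: eq_bigr => x _; rewrite sum_cfunE rmorph_sum big_distrl.
apply: eq_bigr => i _; rewrite big_distrr; apply: eq_bigr => j _.
by rewrite !cfunE rmorphM /= (conj_natr (Cnat_irr1 j)) mulrACA.
Qed.

Lemma sum_cfReg_sqr :
  \sum_(x in H) cfReg G x * (cfReg G x)^* = #|G|%:R ^+ 2.
Proof.
rewrite (bigD1 1%g) //= big1 => [|x /andP[_ /negbTE x_neq1]]; last first.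
  by rewrite cfRegE x_neq1 mul0r.
by rewrite addr0 cfRegE eqxx conj_natr ?rpred_nat.
Qed.

Lemma sum_irr1_norm_sum_irr_conj :
  \sum_(i : Iirr G) \sum_(j : Iirr G)
     'chi_i 1%g * 'chi_j 1%g * `| \sum_(x in H) 'chi_i x * ('chi_j x)^* |
  = #|G|%:R ^+ 2.
Proof.
rewrite -sum_cfReg_sqr -sum_irr1_sum_irr_conj.
apply: eq_bigr => i _; apply: eq_bigr => j _.
by rewrite norm_natr ?sum_char_conj_nat ?irr_char.
Qed.

End RegularCharacterOverSubgroup.

Theorem lemma4p3 (gT : finGroupType) (G : {group gT}) :
  ((#|G|%:R ^+ 2)^-1 *
   \sum_(i : Iirr G) \sum_(j : Iirr G)
     'chi_i 1%g * 'chi_j 1%g *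
     `| \sum_(x in 'Z(G)) 'chi_i x * ('chi_j x)^* | = 1 :> algC)%R.
Proof.
rewrite sum_irr1_norm_sum_irr_conj ?center_sub // mulVf //.
by rewrite expf_neq0 // pnatr_eq0 -lt0n cardG_gt0.
Qed.
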